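(* Every statistically convergent sequence in an $S$-metric space $(X,S)$ is statistically bounded.
   Context: An $S$-metric on a nonempty set $X$ is a function $S:X^3\to[0,\infty)$ such that for all $x,y,z,a\in X$: $S(x,y,z)=0$ if and only if $x=y=z$, and $S(x,y,z)\le S(x,x,a)+S(y,y,a)+S(z,z,a)$. For $B\subset\mathbb N$ the natural density is $\delta(B)=\lim_{n\to\infty}\frac{|\{k\in B:k\le n\}|}{n}$ when the limit exists. A sequence $\{x_n\}$ is statistically convergent to $x\in X$ if for every $\varepsilon>0$, $\delta(\{n: S(x_n,x_n,x)\ge\varepsilon\})=0$. A sequence $\{x_n\}$ is statistically bounded if for any fixed $u\in X$ there exists a positive real number $B$ such that $\delta(\{n\in\mathbb N: S(x_n,x_n,u)\ge B\})=0$. *)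

From Stdlib Require Import Reals ClassicalDescription.
Open Scope R_scope.

Record is_S_metric {X : Type} (S : X -> X -> X -> R) : Prop := {
  Smet_nonneg : forall x y z, 0 <= S x y z;
  Smet_zero : forall x y z, S x y z = 0 <-> (x = y /\ y = z);
  Smet_ineq : forall x y z a, S x y z <= S x x a + S y y a + S z z a
}.

Definition ind (B : nat -> Prop) (k : nat) : R :=
  if excluded_middle_informative (B k) then 1 else 0.

(* |{k in B : 1 <= k <= n}|, with N = {1,2,...} *)
Fixpoint count_upto (B : nat -> Prop) (n : nat) : R :=
  match n with
  | O => 0
  | S m => count_upto B m + ind B (S m)
  end.

Definition has_density (B : nat -> Prop) (d : R) : Prop :=
  Un_cv (fun n => count_upto B n / INR n) d.

(* statistical convergence of x (indexed by N = {1,2,...}; x 0 is irrelevant) *)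
Definition stat_converges {X : Type} (S : X -> X -> X -> R) (x : nat -> X) (l : X) : Prop :=
  forall eps, 0 < eps -> has_density (fun n => S (x n) (x n) l >= eps) 0.

Definition stat_bounded {X : Type} (S : X -> X -> X -> R) (x : nat -> X) : Prop :=
  forall u : X, exists B, 0 < B /\ has_density (fun n => S (x n) (x n) u >= B) 0.

(* If [S(x_n, x_n, l) < 1/2] then, by the S-metric inequality with pivot [l],
   [S(x_n, x_n, u) <= 2 S(x_n, x_n, l) + S(u, u, l) < S(u, u, l) + 1].  Hence the
   indices where [S(x_n, x_n, u) >= S(u, u, l) + 1] lie among those where
   [S(x_n, x_n, l) >= 1/2], a set of density zero by statistical convergence,
   and subsets of density-zero sets have density zero. *)
From Pilot Require Import Defs.
From Stdlib Require Import Reals Lra ClassicalDescription.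
Open Scope R_scope.

Lemma ind_nonneg (A : nat -> Prop) (k : nat) : 0 <= Defs.ind A k.
Proof. unfold Defs.ind; destruct excluded_middle_informative; lra. Qed.

Lemma ind_le (A B : nat -> Prop) (k : nat) :
  (forall n, A n -> B n) -> Defs.ind A k <= Defs.ind B k.
Proof.
  intros hAB; unfold Defs.ind.
  destruct (excluded_middle_informative (A k)) as [hA | _];
    destruct (excluded_middle_informative (B k)) as [_ | hB]; try lra.
  exfalso; exact (hB (hAB k hA)).
Qed.

Lemma count_upto_nonneg (A : nat -> Prop) (n : nat) : 0 <= count_upto A n.
Proof.
  induction n as [| n IH]; simpl; [lra |].
  pose proof (ind_nonneg A (S n)); lra.
Qed.

Lemma count_upto_le (A B : nat -> Prop) (n : nat) :
  (forall k, A k -> B k) -> count_upto A n <= count_upto B n.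
Proof.
  intros hAB; induction n as [| n IH]; simpl; [lra |].
  pose proof (ind_le A B (S n) hAB); lra.
Qed.

(* Includes [n = 0], where [/ 0 = 0]. *)
Lemma Rinv_INR_nonneg (n : nat) : 0 <= / INR n.
Proof.
  destruct n as [| n].
  - simpl; rewrite Rinv_0; lra.
  - apply Rlt_le, Rinv_0_lt_compat, lt_0_INR, Nat.lt_0_succ.
Qed.

Lemma has_density0_subset (A B : nat -> Prop) :
  (forall k, A k -> B k) -> has_density B 0 -> has_density A 0.
Proof.
  intros hAB hB eps heps.
  destruct (hB eps heps) as [N HN]; exists N; intros n hn.
  specialize (HN n hn); unfold R_dist, Rdiv in *; rewrite Rminus_0_r in *.
  assert (hA_nonneg : 0 <= count_upto A n * / INR n)
    by (apply Rmult_le_pos; [apply count_upto_nonneg | apply Rinv_INR_nonneg]).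
  assert (hA_le_B : count_upto A n * / INR n <= count_upto B n * / INR n)
    by (apply Rmult_le_compat_r; [apply Rinv_INR_nonneg | apply count_upto_le, hAB]).
  rewrite Rabs_pos_eq in HN by lra; rewrite Rabs_pos_eq by lra; lra.
Qed.

Lemma Smet_le_pivot (X : Type) (S : X -> X -> X -> R) (hS : is_S_metric S)
  (x u l : X) : S x x u <= 2 * S x x l + S u u l.
Proof. pose proof (Smet_ineq S hS x x u l); lra. Qed.

Theorem corollary3p2 (X : Type) (S : X -> X -> X -> R) (hS : is_S_metric S)
  (x : nat -> X) (l : X) :
  stat_converges S x l -> stat_bounded S x.
Proof.
  intros hconv u; exists (S u u l + 1); split.
  - pose proof (Smet_nonneg S hS u u l); lra.
  - apply has_density0_subset with (B := fun n => S (x n) (x n) l >= 1 / 2).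
    + intros k hk; pose proof (Smet_le_pivot X S hS (x k) u l); lra.
    + apply hconv; lra.
Qed.
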